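(* Let $(\mathbb{X},\dagger)$ be a dagger additive category and let $\begin{bmatrix}\alpha&\beta\\ \beta^\dagger&\delta\end{bmatrix}:B\oplus C\to B\oplus C$ be a $\dagger$-positive map such that there is a map $\begin{bmatrix}\phi&\psi\end{bmatrix}:B\oplus C\to D$ with $\begin{bmatrix}\alpha&\beta\\ \beta^\dagger&\delta\end{bmatrix}=\begin{bmatrix}\phi&\psi\end{bmatrix}^\dagger\circ\begin{bmatrix}\phi&\psi\end{bmatrix}$ for which $\phi:B\to D$ has an [MP.1,3]-inverse $\phi^\bullet:D\to B$. Then $m=\psi^\dagger\circ(\phi^\bullet)^\dagger$ is a conditional generator of $\begin{bmatrix}\alpha&\beta\\ \beta^\dagger&\delta\end{bmatrix}$.
   Context: A dagger additive category is a dagger category (contravariant identity-on-objects involutive functor $\dagger$) whose hom-sets are abelian groups with bilinear composition and additive $\dagger$, having a zero object and finite biproducts whose projections $\pi_j$ and injections $\iota_j$ satisfy $\pi_j^\dagger=\iota_j$. Maps between biproducts are written as matrices; composition is matrix multiplication and $\dagger$ is transpose with entrywise $\dagger$. An endomorphism $p$ is $\dagger$-positive if $p=\chi^\dagger\circ\chi$ for some map $\chi$. An [MP.1,3]-inverse of $f:A\to B$ is a map $f^\bullet:B\to A$ with $f\circ f^\bullet\circ f=f$ and $(f\circ f^\bullet)^\dagger=f\circ f^\bullet$. A conditional generator for a $\dagger$-positive map $\begin{bmatrix}\alpha&\beta\\ \beta^\dagger&\delta\end{bmatrix}:B\oplus C\to B\oplus C$ (with $\alpha:B\to B$, $\beta:C\to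 B$, $\delta:C\to C$) is a map $m:B\to C$ with (i) $m\circ\alpha=\beta^\dagger$ and (ii) $\delta-m\circ\beta$ is $\dagger$-positive. *)

From HB Require Import structures.
From mathcomp Require Import all_boot all_algebra.
Set Implicit Arguments. Unset Strict Implicit. Unset Printing Implicit Defensive.
Import GRing.Theory.
Local Open Scope ring_scope.

(* A dagger additive category, with a chosen zero object and chosen binary
   biproducts (binary biproducts + zero object = all finite biproducts). *)
Record DaggerAdditiveCat := {
  Ob : Type;
  Mor : Ob -> Ob -> zmodType;
  mcomp : forall A B C : Ob, Mor B C -> Mor A B -> Mor A C;
  idm : forall A : Ob, Mor A A;
  dag : forall A B : Ob, Mor A B -> Mor B A;
  comp_assoc : forall A B C E (h : Mor C E) (g : Mor B C) (f : Mor A B),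
      mcomp h (mcomp g f) = mcomp (mcomp h g) f;
  comp_id_l : forall A B (f : Mor A B), mcomp (idm B) f = f;
  comp_id_r : forall A B (f : Mor A B), mcomp f (idm A) = f;
  comp_addl : forall A B C (g g' : Mor B C) (f : Mor A B),
      mcomp (g + g') f = mcomp g f + mcomp g' f;
  comp_addr : forall A B C (g : Mor B C) (f f' : Mor A B),
      mcomp g (f + f') = mcomp g f + mcomp g f';
  dag_comp : forall A B C (g : Mor B C) (f : Mor A B),
      dag (mcomp g f) = mcomp (dag f) (dag g);
  dag_id : forall A, dag (idm A) = idm A;
  dag_invol : forall A B (f : Mor A B), dag (dag f) = f;
  dag_add : forall A B (f g : Mor A B), dag (f + g) = dag f + dag g;
  zob : Ob;
  zob_init : forall A (f : Mor zob A), f = 0;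
  zob_term : forall A (f : Mor A zob), f = 0;
  bip : Ob -> Ob -> Ob;
  pi1 : forall A B, Mor (bip A B) A;
  pi2 : forall A B, Mor (bip A B) B;
  io1 : forall A B, Mor A (bip A B);
  io2 : forall A B, Mor B (bip A B);
  pi1_io1 : forall A B, mcomp (pi1 A B) (io1 A B) = idm A;
  pi2_io2 : forall A B, mcomp (pi2 A B) (io2 A B) = idm B;
  pi1_io2 : forall A B, mcomp (pi1 A B) (io2 A B) = 0;
  pi2_io1 : forall A B, mcomp (pi2 A B) (io1 A B) = 0;
  io_pi_sum : forall A B,
      mcomp (io1 A B) (pi1 A B) + mcomp (io2 A B) (pi2 A B) = idm (bip A B);
  dag_pi1 : forall A B, dag (pi1 A B) = io1 A B;
  dag_pi2 : forall A B, dag (pi2 A B) = io2 A B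
}.

Arguments Mor : clear implicits.
Arguments mcomp {d A B C}.
Arguments idm {d}.
Arguments dag {d A B}.
Arguments bip {d}.
Arguments pi1 {d A B}.
Arguments pi2 {d A B}.
Arguments io1 {d A B}.
Arguments io2 {d A B}.

Section Defs.
Variable X : DaggerAdditiveCat.

(* 2x2 matrix [a b; c e] : A (+) B -> A' (+) B'  *)
Definition mat22 (A B A' B' : Ob X) (a : Mor X A A') (b : Mor X B A')
    (c : Mor X A B') (e : Mor X B B') : Mor X (bip A B) (bip A' B') :=
  mcomp io1 (mcomp a pi1) + mcomp io1 (mcomp b pi2)
  + mcomp io2 (mcomp c pi1) + mcomp io2 (mcomp e pi2).

Definition row2 (A B E : Ob X) (f : Mor X A E) (g : Mor X B E)
    : Mor X (bip A B) E :=
  mcomp f pi1 + mcomp g pi2.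

Definition dag_positive (A : Ob X) (p : Mor X A A) : Prop :=
  exists (E : Ob X) (chi : Mor X A E), p = mcomp (dag chi) chi.

Definition MP13_inverse (A B : Ob X) (f : Mor X A B) (fb : Mor X B A) : Prop :=
  mcomp f (mcomp fb f) = f /\ dag (mcomp f fb) = mcomp f fb.

Definition conditional_generator (B C : Ob X) (alpha : Mor X B B)
    (beta : Mor X C B) (delta : Mor X C C) (m : Mor X B C) : Prop :=
  mcomp m alpha = dag beta /\ dag_positive (delta - mcomp m beta).

End Defs.

(* The Gram matrix of [φ ψ] has entries α = φ†φ, β = φ†ψ and δ = ψ†ψ.
   For an [MP.1,3]-inverse φ•, the map P = φφ• is a self-adjoint idempotent
   with Pφ = φ, and (φ•)†φ† = P† = P.  Hence mα = ψ†Pφ = ψ†φ = β†, and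
   δ - mβ = ψ†ψ - ψ†Pψ = ((1 - P)ψ)†((1 - P)ψ) because 1 - P is again a
   self-adjoint idempotent.  The factorisation through [φ ψ] already makes
   the matrix †-positive. *)

From mathcomp Require Import all_boot all_algebra.
Set Implicit Arguments. Unset Strict Implicit. Unset Printing Implicit Defensive.
Import GRing.Theory.
Local Open Scope ring_scope.

Section AdditiveMorph.
Variables (U V : zmodType) (f : U -> V).
Hypothesis fD : {morph f : x y / x + y}.

Lemma add_morphB : {morph f : x y / x - y}.
Proof. by move=> x y; have := fD (x - y) y; rewrite subrK => ->; rewrite addrK. Qed.

Lemma add_morph0 : f 0 = 0.
Proof. by rewrite -(subrr 0) add_morphB subrr. Qed.

End AdditiveMorph.

Section DaggerAdditive.
Variable X : DaggerAdditiveCat.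

Lemma compBr (A B C : Ob X) (g : Mor X B C) (f f' : Mor X A B) :
  mcomp g (f - f') = mcomp g f - mcomp g f'.
Proof. exact: add_morphB (comp_addr g) f f'. Qed.

Lemma compBl (A B C : Ob X) (g g' : Mor X B C) (f : Mor X A B) :
  mcomp (g - g') f = mcomp g f - mcomp g' f.
Proof. exact: add_morphB (fun g g' => comp_addl g g' f) g g'. Qed.

Lemma comp0r (A B C : Ob X) (g : Mor X B C) : mcomp g (0 : Mor X A B) = 0.
Proof. exact: add_morph0 (comp_addr g). Qed.

Lemma comp0l (A B C : Ob X) (f : Mor X A B) : mcomp (0 : Mor X B C) f = 0.
Proof. exact: add_morph0 (fun g g' => comp_addl g g' f). Qed.

Lemma dagB (A B : Ob X) (f g : Mor X A B) : dag (f - g) = dag f - dag g.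
Proof. exact: add_morphB (@dag_add X A B) f g. Qed.

Lemma dag_io1 (A B : Ob X) : dag (@io1 X A B) = pi1.
Proof. by rewrite -dag_pi1 dag_invol. Qed.

Lemma dag_io2 (A B : Ob X) : dag (@io2 X A B) = pi2.
Proof. by rewrite -dag_pi2 dag_invol. Qed.

Lemma mat22_entries (A B A' B' : Ob X) (a : Mor X A A') (b : Mor X B A')
    (c : Mor X A B') (e : Mor X B B') :
  [/\ mcomp pi1 (mcomp (mat22 a b c e) io1) = a,
      mcomp pi1 (mcomp (mat22 a b c e) io2) = b,
      mcomp pi2 (mcomp (mat22 a b c e) io1) = c
    & mcomp pi2 (mcomp (mat22 a b c e) io2) = e].
Proof.
rewrite /mat22 !comp_addl !comp_addr -!comp_assoc.
rewrite !(pi1_io1, pi1_io2, pi2_io1, pi2_io2, comp_id_r, comp0r) !comp_assoc.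
by rewrite !(pi1_io1, pi1_io2, pi2_io1, pi2_io2, comp_id_l, comp0l, addr0, add0r).
Qed.

Lemma row2_io1 (A B E : Ob X) (f : Mor X A E) (g : Mor X B E) :
  mcomp (row2 f g) io1 = f.
Proof.
by rewrite /row2 comp_addl -!comp_assoc pi1_io1 pi2_io1 comp0r comp_id_r addr0.
Qed.

Lemma row2_io2 (A B E : Ob X) (f : Mor X A E) (g : Mor X B E) :
  mcomp (row2 f g) io2 = g.
Proof.
by rewrite /row2 comp_addl -!comp_assoc pi1_io2 pi2_io2 comp0r comp_id_r add0r.
Qed.

Lemma comp_gram (A E U W : Ob X) (R : Mor X A E) (u : Mor X U A)
    (w : Mor X W A) :
  mcomp (dag u) (mcomp (mcomp (dag R) R) w)
  = mcomp (dag (mcomp R u)) (mcomp R w).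
Proof. by rewrite dag_comp !comp_assoc. Qed.

Lemma mat22_gram_row2 (A B E : Ob X) (a : Mor X A A) (b : Mor X B A)
    (c : Mor X A B) (e : Mor X B B) (f : Mor X A E) (g : Mor X B E) :
  mat22 a b c e = mcomp (dag (row2 f g)) (row2 f g) ->
  [/\ a = mcomp (dag f) f, b = mcomp (dag f) g,
      c = mcomp (dag g) f & e = mcomp (dag g) g].
Proof.
move=> gramE; have [] := mat22_entries a b c e.
rewrite gramE -(dag_io1 A B) -(dag_io2 A B) !comp_gram row2_io1 row2_io2.
by move=> <- <- <- <-.
Qed.

Lemma MP13_proj_idem (A B : Ob X) (f : Mor X A B) (fb : Mor X B A) :
  MP13_inverse f fb -> mcomp (mcomp f fb) (mcomp f fb) = mcomp f fb.
Proof. by case=> fK _; rewrite comp_assoc -(comp_assoc f fb f) fK. Qed.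

Lemma MP13_dag_comp (A B : Ob X) (f : Mor X A B) (fb : Mor X B A) :
  MP13_inverse f fb -> mcomp (mcomp (dag fb) (dag f)) f = f.
Proof. by case=> fK fbf_sa; rewrite -dag_comp fbf_sa -comp_assoc fK. Qed.

Lemma dag_positive_gram_sub_proj (A C : Ob X) (P : Mor X A A) (f : Mor X C A) :
  dag P = P -> mcomp P P = P ->
  dag_positive (mcomp (dag f) f - mcomp (dag f) (mcomp P f)).
Proof.
move=> P_sa P_idem; exists A, (f - mcomp P f).
rewrite dagB dag_comp P_sa compBl !compBr -!comp_assoc (comp_assoc P P f) P_idem.
by rewrite subrr subr0.
Qed.

End DaggerAdditive.

Theorem mainTheorem12 (X : DaggerAdditiveCat) (B C D : Ob X)
    (alpha : Mor X B B) (beta : Mor X C B) (delta : Mor X C C)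
    (phi : Mor X B D) (psi : Mor X C D) (phib : Mor X D B) :
  dag_positive (mat22 alpha beta (dag beta) delta) ->
  mat22 alpha beta (dag beta) delta
    = mcomp (dag (row2 phi psi)) (row2 phi psi) ->
  MP13_inverse phi phib ->
  conditional_generator alpha beta delta (mcomp (dag psi) (dag phib)).
Proof.
move=> _ gramE phibMP; have [_ proj_sa] := phibMP.
have [-> -> _ ->] := mat22_gram_row2 gramE.
split.
  by rewrite -comp_assoc (comp_assoc (dag phib)) MP13_dag_comp // dag_comp dag_invol.
have -> : mcomp (mcomp (dag psi) (dag phib)) (mcomp (dag phi) psi)
          = mcomp (dag psi) (mcomp (mcomp phi phib) psi).
  by rewrite -comp_assoc (comp_assoc (dag phib)) -dag_comp proj_sa.
exact: dag_positive_gram_sub_proj (MP13_proj_idem phibMP).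
Qed.
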